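(* Let $\mathbf{G}=(G_1,\dots,G_5)$ be a $5$-multigraph on four vertices not containing three crossing pairs and set $e=e(\mathbf{G})$. (i) If $e\ge 23$, then there exists an enumeration $V(\mathbf{G})=\{w,x,y,z\}$ such that $e(w,x)+e(y,z)\le 5$. (ii) If $e\ge 22$, then there exist two distinct vertices $u$ and $v$ with $e(u,v)=5$.
   Context: A $5$-multigraph $\mathbf{G}=(G_1,\dots,G_5)$ is a $5$-tuple of simple graphs on a common vertex set $V(\mathbf{G})$; $e(\mathbf{G})=\sum_{i=1}^5 e(G_i)$, and for distinct vertices $u,v$ the multiplicity $e(u,v)$ is the number of indices $i$ with $uv\in E(G_i)$. $\mathbf{G}$ contains three crossing pairs if there are three distinct indices $i,j,k\in[5]$ and four distinct vertices $w,x,y,z$ with $wx,yz\in E(G_i)$, $wy,xz\in E(G_j)$ and $wz,xy\in E(G_k)$. *)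

From mathcomp Require Import all_boot.
Set Implicit Arguments. Unset Strict Implicit. Unset Printing Implicit Defensive.

Definition simple_graph (T : finType) (g : rel T) : Prop :=
  (forall u v, g u v = g v u) /\ (forall u, ~~ g u u).

Definition multigraph5 (T : finType) := 'I_5 -> rel T.

Definition is_multigraph5 (T : finType) (G : multigraph5 T) : Prop :=
  forall i, simple_graph (G i).

Definition edges (T : finType) (g : rel T) : {set {set T}} :=
  [set s : {set T} | [exists u, exists v, (u != v) && g u v && (s == [set u; v])]].

Definition e_tot (T : finType) (G : multigraph5 T) : nat :=
  \sum_(i < 5) #|edges (G i)|.

Definition mult (T : finType) (G : multigraph5 T) (u v : T) : nat :=
  #|[set i : 'I_5 | G i u v]|.

Definition three_crossing_pairs (T : finType) (G : multigraph5 T) : Prop :=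
  exists (i j k : 'I_5) (w x y z : T),
    [/\ i != j, i != k, j != k &
    [/\ uniq [:: w; x; y; z],
        G i w x && G i y z,
        G j w y && G j x z &
        G k w z && G k x y]].

From mathcomp Require Import all_boot zify.
Set Implicit Arguments. Unset Strict Implicit. Unset Printing Implicit Defensive.

(* Enumerate the vertices as a, b, c, d and group the six pairs into the three
   perfect matchings ab|cd, ac|bd, ad|bc.  The two multiplicities of a matching
   add up to at most 5 plus the number of colours containing both of its edges,
   and e(G) is at most the sum of all six multiplicities.  Three crossing pairs
   are exactly distinct representatives of these three colour sets, so Hall's
   condition fails for them; for three sets it holds as soon as their sizes,
   sorted, are at least 1, 2 and 3.  If every matching had total multiplicity
   at least 6 (part (i)), or every multiplicity were at most 4 (part (ii)), the
   counting bounds would force sizes of that kind. *)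


Section DistinctRepresentatives.

Variable T : finType.

Definition distinct_reps (A B C : {set T}) :=
  exists i j k, [/\ i \in A, j \in B, k \in C & [/\ i != j, i != k & j != k]].

Lemma distinct_repsCl A B C : distinct_reps A B C -> distinct_reps B A C.
Proof.
by move=> [i [j [k [? ? ? [ij ? ?]]]]]; exists j, i, k; rewrite eq_sym in ij.
Qed.

Lemma distinct_repsCr A B C : distinct_reps A B C -> distinct_reps A C B.
Proof.
by move=> [i [j [k [? ? ? [? ? jk]]]]]; exists i, k, j; rewrite eq_sym in jk.
Qed.

Lemma distinct_reps_greedy (A B C : {set T}) :
  0 < #|A| -> 1 < #|B| -> 2 < #|C| -> distinct_reps A B C.
Proof.
move=> /card_gt0P [i Ai] B_gt1 C_gt2.
have /card_gt0P [j] : 0 < #|B :\ i|.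
  by move: B_gt1; rewrite (cardsD1 i); case: (i \in B) => /=; lia.
rewrite !inE => /andP [ji Bj].
have /card_gt0P [k] : 0 < #|C :\ i :\ j|.
  move: C_gt2; rewrite (cardsD1 i) (cardsD1 j (C :\ i)).
  by case: (i \in C); case: (j \in C :\ i) => /=; lia.
rewrite !inE => /and3P [kj ki Ck].
by exists i, j, k; rewrite eq_sym ji (eq_sym i) ki eq_sym kj.
Qed.

Lemma distinct_reps_card (A B C : {set T}) :
  0 < #|A| -> 0 < #|B| -> 0 < #|C| ->
  2 < #|A| + #|B| -> 2 < #|A| + #|C| -> 2 < #|B| + #|C| ->
  6 < #|A| + #|B| + #|C| -> distinct_reps A B C.
Proof.
wlog C_max : A B C / (#|A| <= #|C|) && (#|B| <= #|C|).
  move=> base *.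
  case: (leqP #|A| #|C|) => [AC|CA]; case: (leqP #|B| #|C|) => [BC|CB].
  - by apply: base; rewrite ?AC ?BC.
  - by apply/distinct_repsCr/base => //; lia.
  - by apply/distinct_repsCl/distinct_repsCr/base => //; lia.
  - case: (leqP #|A| #|B|) => AB.
    + by apply/distinct_repsCr/base => //; lia.
    + by apply/distinct_repsCl/distinct_repsCr/base => //; lia.
wlog A_le_B : A B C_max / #|A| <= #|B|.
  move=> base *; case: (leqP #|A| #|B|) => AB; first exact: base.
  by apply/distinct_repsCl/base => //; lia.
move=> *; apply: distinct_reps_greedy; lia.
Qed.

End DistinctRepresentatives.

Section Multigraph.

Variables (T : finType) (G : multigraph5 T).

Definition covers_pairs (s : seq (T * T)) :=
  forall u v, u != v -> ((u, v) \in s) || ((v, u) \in s).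

Lemma card_edges_le (g : rel T) (s : seq (T * T)) :
  simple_graph g -> covers_pairs s -> #|edges g| <= \sum_(p <- s) g p.1 p.2.
Proof.
move=> [g_sym _] cover.
pose s_g := [seq p <- s | g p.1 p.2].
have sub : edges g \subset [set [set p.1; p.2] | p in s_g].
  apply/subsetP => e; rewrite inE.
  move=> /existsP [u /existsP [v /andP [/andP [uv guv] /eqP ->]]].
  apply/imsetP; have /orP [us | vs] := cover u v uv.
    by exists (u, v); rewrite // mem_filter guv.
  by exists (v, u); rewrite 1?setUC // mem_filter /= g_sym guv.
apply: (leq_trans (subset_leq_card sub)); apply: (leq_trans (leq_imset_card _ _)).
rewrite (leq_trans (card_size _)) // size_filter -sum1_count big_mkcond /=.
by apply: leq_sum => p _; case: ifP.
Qed.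

Lemma mult_le5 u v : mult G u v <= 5.
Proof. by rewrite /mult (leq_trans (max_card _)) ?card_ord. Qed.

Lemma mult_sum u v : mult G u v = \sum_(i < 5) G i u v.
Proof.
by rewrite /mult -sum1dep_card big_mkcond; apply: eq_bigr => i _; case: (G i u v).
Qed.

Lemma e_tot_le_sum_mult s :
  is_multigraph5 G -> covers_pairs s -> e_tot G <= \sum_(p <- s) mult G p.1 p.2.
Proof.
move=> simpleG cover.
under eq_bigr do rewrite mult_sum.
rewrite exchange_big /=; apply: leq_sum => i _; exact: card_edges_le.
Qed.

Definition common_colors (u v x y : T) : {set 'I_5} := [set i | G i u v && G i x y].

Lemma mult_add_le u v x y : mult G u v + mult G x y <= 5 + #|common_colors u v x y|.
Proof.
rewrite /mult -cardsUI.
have -> : [set i | G i u v] :&: [set i | G i x y] = common_colors u v x y.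
  by apply/setP => i; rewrite !inE.
by rewrite leq_add2r (leq_trans (max_card _)) ?card_ord.
Qed.

End Multigraph.

Lemma enum_card4 (T : finType) :
  #|T| = 4 -> exists a b c d : T, uniq [:: a; b; c; d] /\ forall x, x \in [:: a; b; c; d].
Proof.
rewrite cardE => size4; have := enum_uniq T; have := mem_enum T.
case: (enum T) size4 => [|a [|b [|c [|d [|? ?]]]]] // _ allT uniqT.
by exists a, b, c, d; split => // x; rewrite allT.
Qed.

Lemma covers_matchings (T : finType) (a b c d : T) :
  (forall x, x \in [:: a; b; c; d]) ->
  covers_pairs [:: (a, b); (c, d); (a, c); (b, d); (a, d); (b, c)].
Proof.
move=> allT u v; move: (allT u) (allT v); rewrite !inE.
by do 2 case/or4P=> /eqP ->; rewrite ?eqxx ?orbT.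
Qed.

Lemma three_crossing_pairs_of_reps (T : finType) (G : multigraph5 T) w x y z :
  uniq [:: w; x; y; z] ->
  distinct_reps (common_colors G w x y z) (common_colors G w y x z)
                (common_colors G w z x y) ->
  three_crossing_pairs G.
Proof.
move=> uniq_wxyz [i [j [k [Ci Cj Ck [ij ik jk]]]]]; rewrite !inE in Ci Cj Ck.
by exists i, j, k, w, x, y, z.
Qed.

Theorem lemma3p5 (T : finType) (G : multigraph5 T) :
  is_multigraph5 G -> #|T| = 4 -> ~ three_crossing_pairs G ->
  (23 <= e_tot G ->
     exists w x y z : T, uniq [:: w; x; y; z] /\ mult G w x + mult G y z <= 5) /\
  (22 <= e_tot G -> exists u v : T, u != v /\ mult G u v = 5).
Proof.
move=> simpleG card4 no_crossing.
have [a [b [c [d [uniq_abcd allT]]]]] := enum_card4 card4.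
have e_le := e_tot_le_sum_mult simpleG (covers_matchings allT).
rewrite !big_cons big_nil /= in e_le.
have no_reps := contra_not (three_crossing_pairs_of_reps uniq_abcd) no_crossing.
have S1 := mult_add_le G a b c d; have S2 := mult_add_le G a c b d.
have S3 := mult_add_le G a d b c.
move: uniq_abcd; rewrite /= !inE !negb_or => /and4P [/and3P [ab ac ad] /andP [bc bd] cd _].
move: (mult_le5 G a b) (mult_le5 G a c) (mult_le5 G a d).
move: (mult_le5 G b c) (mult_le5 G b d) (mult_le5 G c d) => *.
split => [e_ge23 | e_ge22].
- have [S1_le5 | S1_gt5] := leqP (mult G a b + mult G c d) 5.
    by exists a, b, c, d; rewrite /= !inE !negb_or ab ac ad bc bd cd.
  have [S2_le5 | S2_gt5] := leqP (mult G a c + mult G b d) 5.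
    by exists a, c, b, d; rewrite /= !inE !negb_or ab ac ad (eq_sym c) bc bd cd.
  have [S3_le5 | S3_gt5] := leqP (mult G a d + mult G b c) 5.
    by exists a, d, b, c; rewrite /= !inE !negb_or ab ac ad !(eq_sym d) bc bd cd.
  by case: no_reps; apply: distinct_reps_card; lia.
- have [? | ?] := eqVneq (mult G a b) 5; first by exists a, b.
  have [? | ?] := eqVneq (mult G a c) 5; first by exists a, c.
  have [? | ?] := eqVneq (mult G a d) 5; first by exists a, d.
  have [? | ?] := eqVneq (mult G b c) 5; first by exists b, c.
  have [? | ?] := eqVneq (mult G b d) 5; first by exists b, d.
  have [? | ?] := eqVneq (mult G c d) 5; first by exists c, d.
  by case: no_reps; apply: distinct_reps_card; lia.
Qed.
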